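(* For every $m\in\mathbb{N}$ and every $0<\varepsilon<1$, the set $E_\varepsilon$ is a convex subset of $\mathbb{C}^m$.
   Context: For $m\in\mathbb{N}$ let $\xi_j=e^{(2j-1)\pi i/m}$, $j=1,\dots,m$ (the $m$-th roots of $-1$ in counterclockwise order), with $\xi_{m+1}:=\xi_1$. For $\varepsilon>0$ define \[E_\varepsilon=\Big\{(r_1,\dots,r_m)\in\prod_{j=1}^m\exp(\overline{D}(0,\varepsilon)) : \tfrac{r_{j+1}\xi_{j+1}-r_j\xi_j}{\xi_{j+1}-\xi_j}\in\exp(\overline{D}(0,\varepsilon)),\ 1\le j\le m\Big\},\] with $r_{m+1}:=r_1$, where $\exp(\overline D(0,\varepsilon))=\{e^{u}:|u|\le\varepsilon\}$. *)

From Stdlib Require Import Reals Lra.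
Open Scope R_scope.

Definition C : Type := (R * R)%type.

Definition Cadd (z w : C) : C := (fst z + fst w, snd z + snd w).
Definition Csub (z w : C) : C := (fst z - fst w, snd z - snd w).
Definition Cmul (z w : C) : C :=
  (fst z * fst w - snd z * snd w, fst z * snd w + snd z * fst w).
Definition Cscale (t : R) (z : C) : C := (t * fst z, t * snd z).
Definition Cnorm (z : C) : R := sqrt (fst z ^ 2 + snd z ^ 2).
(* z / w (only used with w <> 0) *)
Definition Cdiv (z w : C) : C :=
  let d := fst w ^ 2 + snd w ^ 2 in
  ((fst z * fst w + snd z * snd w) / d, (snd z * fst w - fst z * snd w) / d).
Definition Cexp (z : C) : C := (exp (fst z) * cos (snd z), exp (fst z) * sin (snd z)).

Definition in_expDisk (eps : R) (z : C) : Prop :=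
  exists u : C, Cnorm u <= eps /\ Cexp u = z.

(* xi_j = e^{(2j-1) pi i / m}; here indices are 0-based: index k (0 <= k < m)
   corresponds to the paper's j = k+1, so xi k = e^{(2k+1) pi i / m}. *)
Definition xi (m k : nat) : C := Cexp (0, (2 * INR k + 1) * PI / INR m).

(* cyclic successor of a 0-based index: k+1 mod m, so r_{m+1} := r_1 *)
Definition succ_idx (m k : nat) : nat := Nat.modulo (S k) m.

(* Points of C^m are functions nat -> C, only indices 0..m-1 being relevant. *)
Definition E (m : nat) (eps : R) (r : nat -> C) : Prop :=
  forall k : nat, (k < m)%nat ->
    in_expDisk eps (r k) /\
    in_expDisk eps
      (Cdiv (Csub (Cmul (r (succ_idx m k)) (xi m (succ_idx m k))) (Cmul (r k) (xi m k)))
            (Csub (xi m (succ_idx m k)) (xi m k))).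

Definition convex_Cm (S : (nat -> C) -> Prop) : Prop :=
  forall (r s : nat -> C) (t : R), S r -> S s -> 0 <= t <= 1 ->
    S (fun k => Cadd (Cscale (1 - t) (r k)) (Cscale t (s k))).

(* An edge quotient is a real-linear function of r, so it
   commutes with convex combinations ([edge_quotient_convex]); the theorem
   thus reduces to the convexity of exp(D(0,eps)) ([expDisk_convex]).

   For the latter we use the principal logarithm [Clog] on the right
   half-plane: z lies in exp(D(0,eps)) iff |Clog z| <= eps.  The estimate
   cos y >= e^(sqrt(1-y^2)-1) shows that exp(D(0,eps)) lies in the half-plane
   Re z > 1/e, so along a segment joining two of its points ln|z| > -1.  On
   such a segment, q(s) = |Clog z(s)|^2 has second derivative
   2 |z2 - z1|^2 (1 + ln|z|) / |z|^2 > 0 at each critical point, so q has no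
   interior maximum and is bounded by its endpoint values, which are <= eps^2. *)

From Stdlib Require Import Reals Lra Psatz.
From Coquelicot Require Import Coquelicot.
(* imported last, so that the complex-number operations of [Defs] shadow
   Coquelicot's homonymous ones *)
From Pilot Require Import Defs.
Open Scope R_scope.

Lemma exp_le (x y : R) : x <= y -> exp x <= exp y.
Proof.
  intros H; destruct (Rle_lt_or_eq_dec _ _ H) as [Hlt | ->].
  - left; apply exp_increasing; exact Hlt.
  - right; reflexivity.
Qed.

Lemma Cnorm_le_iff (eps : R) (u : C) :
  0 <= eps -> Cnorm u <= eps <-> fst u ^ 2 + snd u ^ 2 <= eps ^ 2.
Proof.
  intros He; unfold Cnorm.
  assert (Hnn : 0 <= fst u ^ 2 + snd u ^ 2) by nra.
  split; intros H.
  - pose proof (sqrt_pos (fst u ^ 2 + snd u ^ 2)).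
    rewrite <- (sqrt_sqrt (fst u ^ 2 + snd u ^ 2)) by exact Hnn; nra.
  - rewrite <- (sqrt_pow2 eps) by exact He; apply sqrt_le_1_alt; exact H.
Qed.

Lemma cos_pos_of_small (y : R) : Rabs y < 1 -> 0 < cos y.
Proof.
  intros H; apply Rabs_def2 in H; pose proof PI2_1.
  apply cos_gt_0; lra.
Qed.

(* tan c <= c / sqrt(1 - c^2) on [0,1): after squaring this is sin^2 c <= c^2. *)
Lemma tan_le_ratio (c : R) :
  0 <= c < 1 -> sin c / cos c <= c / sqrt (1 - c ^ 2).
Proof.
  intros Hc.
  assert (Hcos : 0 < cos c) by (apply cos_pos_of_small; rewrite Rabs_right; lra).
  set (s := sqrt (1 - c ^ 2)).
  assert (Hs : 0 < s) by (apply sqrt_lt_R0; nra).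
  assert (Hss : s * s = 1 - c ^ 2) by (apply sqrt_sqrt; nra).
  assert (Hsin : 0 <= sin c <= c).
  { destruct (Req_dec c 0) as [-> | Hc0]; [rewrite sin_0; lra |].
    pose proof PI2_1; split; [apply sin_ge_0 | left; apply sin_lt_x]; lra. }
  pose proof (sin2_cos2 c) as Hpyth; unfold Rsqr in Hpyth.
  assert (Hsq : (sin c * s) * (sin c * s) <= (c * cos c) * (c * cos c)).
  { replace ((sin c * s) * (sin c * s)) with (sin c * sin c * (s * s)) by ring.
    rewrite Hss; nra. }
  assert (Hcross : sin c * s <= c * cos c).
  { assert (0 <= sin c * s) by nra; assert (0 <= c * cos c) by nra; nra. }
  apply (Rmult_le_reg_r (cos c * s)); [nra |].
  replace (sin c / cos c * (cos c * s)) with (sin c * s) by (field; lra).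
  replace (c / s * (cos c * s)) with (c * cos c) by (field; lra).
  exact Hcross.
Qed.

(* ln cos y >= sqrt(1 - y^2) - 1 on [0,1): the difference vanishes at 0 and,
   by [tan_le_ratio], is nondecreasing. *)
Lemma cos_lower_bound_nonneg (y : R) :
  0 <= y < 1 -> exp (sqrt (1 - y ^ 2) - 1) <= cos y.
Proof.
  intros Hy.
  set (phi := fun z => ln (cos z) - sqrt (1 - z ^ 2) + 1).
  set (dphi := fun z => - (sin z / cos z) + z / sqrt (1 - z ^ 2)).
  assert (Hphi0 : phi 0 = 0).
  { unfold phi; rewrite cos_0, ln_1.
    replace (1 - 0 ^ 2) with 1 by ring; rewrite sqrt_1; ring. }
  assert (Hphi : 0 <= phi y).
  { destruct (Req_dec y 0) as [-> | Hy0]; [lra |].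
    destruct (MVT_cor2 phi dphi 0 y) as [c [Hmvt Hc]]; [lra | |].
    - intros c Hc; apply is_derive_Reals.
      assert (0 < cos c) by (apply cos_pos_of_small; rewrite Rabs_right; lra).
      assert (0 < 1 - c ^ 2) by nra.
      assert (0 < sqrt (1 - c ^ 2)) by (apply sqrt_lt_R0; lra).
      unfold phi, dphi; auto_derive.
      + repeat split; lra.
      + replace (1 + - (c * (c * 1))) with (1 - c ^ 2) by ring; field; lra.
    - assert (0 <= dphi c) by (unfold dphi; pose proof (tan_le_ratio c ltac:(lra)); lra).
      nra. }
  assert (Hcos : 0 < cos y) by (apply cos_pos_of_small; rewrite Rabs_right; lra).
  rewrite <- (exp_ln (cos y)) by exact Hcos.
  apply exp_le; unfold phi in Hphi; lra.
Qed.

Lemma cos_lower_bound (y : R) :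
  Rabs y < 1 -> exp (sqrt (1 - y ^ 2) - 1) <= cos y.
Proof.
  intros H; destruct (Rle_or_lt 0 y).
  - apply cos_lower_bound_nonneg; rewrite Rabs_right in H; lra.
  - rewrite <- cos_neg; replace (y ^ 2) with ((- y) ^ 2) by ring.
    apply cos_lower_bound_nonneg; rewrite Rabs_left in H; lra.
Qed.

(* exp(D(0,eps)) lies in the half-plane Re z > 1/e when eps < 1:
   if x^2 + y^2 < 1 then x > -sqrt(1 - y^2), so e^x cos y > e^(-1). *)
Lemma expDisk_re_gt (eps x y : R) :
  0 < eps < 1 -> x ^ 2 + y ^ 2 <= eps ^ 2 -> exp (-1) < exp x * cos y.
Proof.
  intros He Hn.
  assert (Hy : Rabs y < 1) by (apply Rabs_def1; nra).
  pose proof (cos_lower_bound y Hy) as Hcos.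
  set (s := sqrt (1 - y ^ 2)) in *.
  assert (Hs : 0 < s) by (apply sqrt_lt_R0; nra).
  assert (Hss : s * s = 1 - y ^ 2) by (apply sqrt_sqrt; nra).
  assert (Hx : - x < s) by nra.
  apply Rlt_le_trans with (exp x * exp (s - 1)).
  - rewrite <- exp_plus; apply exp_increasing; lra.
  - apply Rmult_le_compat_l; [left; apply exp_pos | exact Hcos].
Qed.

Lemma pos_right_of_zero (f : R -> R) (x c : R) :
  derivable_pt_lim f x c -> 0 < c -> f x = 0 ->
  exists h, 0 < h /\ forall k, 0 < k <= h -> 0 < f (x + k).
Proof.
  intros Hd Hc Hz.
  destruct (Hd (c / 2) ltac:(lra)) as [del Hdel].
  pose proof (cond_pos del) as Hdel0.
  exists (del / 2); split; [lra |].
  intros k Hk.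
  assert (Hk0 : k <> 0) by lra.
  assert (Hkd : Rabs k < del) by (rewrite Rabs_right; lra).
  specialize (Hdel k Hk0 Hkd); rewrite Hz, Rminus_0_r in Hdel.
  apply Rabs_def2 in Hdel.
  assert (Hq : 0 < f (x + k) / k) by lra.
  replace (f (x + k)) with (f (x + k) / k * k) by (field; lra).
  apply Rmult_lt_0_compat; lra.
Qed.

(* A differentiable function on [0,1] whose derivative has positive slope at
   each of its interior zeros has no interior maximum: an interior maximum t0
   would be such a zero, and then q would increase just to the right of t0. *)
Lemma max_at_endpoints (q dq : R -> R) :
  (forall s, 0 <= s <= 1 -> derivable_pt_lim q s (dq s)) ->
  (forall s, 0 < s < 1 -> dq s = 0 -> exists c, 0 < c /\ derivable_pt_lim dq s c) ->
  forall t, 0 <= t <= 1 -> q t <= Rmax (q 0) (q 1).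
Proof.
  intros Hd Hconvex t Ht.
  destruct (continuity_ab_maj q 0 1) as [t0 [Hmax Ht0]]; [lra | |].
  { intros c Hc; apply derivable_continuous_pt; exists (dq c); apply Hd; exact Hc. }
  assert (Hqt : q t <= q t0) by (apply Hmax; exact Ht).
  destruct (Req_dec t0 0) as [-> | N0]; [pose proof (Rmax_l (q 0) (q 1)); lra |].
  destruct (Req_dec t0 1) as [-> | N1]; [pose proof (Rmax_r (q 0) (q 1)); lra |].
  exfalso.
  assert (Hcrit : dq t0 = 0).
  { assert (pr : derivable_pt q t0) by (exists (dq t0); apply Hd; lra).
    rewrite <- (derive_pt_eq_0 q t0 (dq t0) pr) by (apply Hd; lra).
    apply (deriv_maximum q 0 1 t0 pr); try lra.
    intros x Hx1 Hx2; apply Hmax; lra. }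
  destruct (Hconvex t0 ltac:(lra) Hcrit) as [c [Hc Hdc]].
  destruct (pos_right_of_zero dq t0 c Hdc Hc Hcrit) as [h0 [Hh0 Hpos]].
  assert (Hh : exists h, 0 < h <= h0 /\ t0 + h < 1).
  { exists (Rmin h0 ((1 - t0) / 2)).
    assert (0 < Rmin h0 ((1 - t0) / 2)) by (apply Rmin_pos; lra).
    pose proof (Rmin_l h0 ((1 - t0) / 2)); pose proof (Rmin_r h0 ((1 - t0) / 2)).
    lra. }
  destruct Hh as [h Hh].
  destruct (MVT_cor2 q dq t0 (t0 + h)) as [xi0 [Hmvt Hxi0]]; [lra | |].
  { intros c0 Hc0; apply Hd; lra. }
  assert (Hdq : 0 < dq xi0) by (replace xi0 with (t0 + (xi0 - t0)) by ring; apply Hpos; lra).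
  assert (Hle : q (t0 + h) <= q t0) by (apply Hmax; lra).
  assert (0 < dq xi0 * (t0 + h - t0)) by (apply Rmult_lt_0_compat; lra).
  lra.
Qed.

(* Principal logarithm on the right half-plane: ln|z| + i atan(Im z / Re z). *)
Definition Clog (z : C) : C := (ln (fst z * fst z + snd z * snd z) / 2, atan (snd z / fst z)).

Definition Clog_norm2 (z : C) : R := fst (Clog z) ^ 2 + snd (Clog z) ^ 2.

Lemma Cexp_Clog (z : C) : 0 < fst z -> Cexp (Clog z) = z.
Proof.
  destruct z as [a b]; cbn [fst snd]; intros Ha.
  assert (Hr : 0 < a * a + b * b) by nra.
  assert (Hmod : exp (ln (a * a + b * b) / 2) = sqrt (a * a + b * b)).
  { rewrite <- (sqrt_square (exp (ln (a * a + b * b) / 2))) by (left; apply exp_pos).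
    rewrite <- exp_plus.
    replace (ln (a * a + b * b) / 2 + ln (a * a + b * b) / 2) with (ln (a * a + b * b))
      by field.
    rewrite exp_ln by exact Hr; reflexivity. }
  assert (Hsec : sqrt (1 + (b / a)²) = sqrt (a * a + b * b) / a).
  { replace (1 + (b / a)²) with ((a * a + b * b) / a²) by (unfold Rsqr; field; lra).
    rewrite sqrt_div_alt, sqrt_Rsqr by (try unfold Rsqr; nra); reflexivity. }
  assert (Hs : 0 < sqrt (a * a + b * b)) by (apply sqrt_lt_R0; exact Hr).
  unfold Cexp, Clog; cbn [fst snd].
  rewrite Hmod, cos_atan, sin_atan, Hsec.
  f_equal; field; lra.
Qed.

Lemma Clog_Cexp (u : C) : Rabs (snd u) < PI / 2 -> Clog (Cexp u) = u.
Proof.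
  destruct u as [x y]; cbn [fst snd]; intros Hy.
  apply Rabs_def2 in Hy.
  assert (Hcos : 0 < cos y) by (apply cos_gt_0; lra).
  unfold Clog, Cexp; cbn [fst snd].
  assert (Hmod : exp x * cos y * (exp x * cos y) + exp x * sin y * (exp x * sin y)
                 = exp (x + x)).
  { rewrite exp_plus; pose proof (sin2_cos2 y) as Hpyth; unfold Rsqr in Hpyth.
    replace (exp x * cos y * (exp x * cos y) + exp x * sin y * (exp x * sin y))
      with (exp x * exp x * (sin y * sin y + cos y * cos y)) by ring.
    rewrite Hpyth; ring. }
  assert (Htan : exp x * sin y / (exp x * cos y) = tan y).
  { unfold tan; field; split; [lra | apply Rgt_not_eq, exp_pos]. }
  rewrite Hmod, ln_exp, Htan, atan_tan by lra.
  f_equal; field.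
Qed.

Lemma expDisk_Clog (eps : R) (z : C) :
  0 < eps < 1 -> in_expDisk eps z ->
  exp (-1) < fst z /\ Clog_norm2 z <= eps ^ 2.
Proof.
  intros He [u [Hu <-]].
  apply Cnorm_le_iff in Hu; [| lra].
  assert (Hy : Rabs (snd u) < PI / 2) by (apply Rabs_def1; pose proof PI2_1; nra).
  unfold Clog_norm2; rewrite Clog_Cexp by exact Hy.
  split; [destruct u as [x y]; apply (expDisk_re_gt eps); auto | exact Hu].
Qed.

Lemma Clog_expDisk (eps : R) (z : C) :
  0 <= eps -> 0 < fst z -> Clog_norm2 z <= eps ^ 2 ->
  in_expDisk eps z.
Proof.
  intros He Hz Hq; exists (Clog z); split.
  - apply Cnorm_le_iff; assumption.
  - apply Cexp_Clog; exact Hz.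
Qed.

Section Segment.
Variables (a1 b1 a2 b2 : R).

Definition seg (s : R) : C := ((1 - s) * a1 + s * a2, (1 - s) * b1 + s * b2).
Definition modsq (s : R) : R := fst (seg s) ^ 2 + snd (seg s) ^ 2.
(* Re and Im of conj(z) * z', where z' = (a2 - a1, b2 - b1) is the velocity. *)
Definition seg_dot (s : R) : R := fst (seg s) * (a2 - a1) + snd (seg s) * (b2 - b1).
Definition seg_cross (s : R) : R := fst (seg s) * (b2 - b1) - snd (seg s) * (a2 - a1).
Definition dlog_norm2 (s : R) : R :=
  2 * (fst (Clog (seg s)) * seg_dot s + snd (Clog (seg s)) * seg_cross s) / modsq s.

Lemma modsq_pos (s : R) : 0 < fst (seg s) -> 0 < modsq s.
Proof.
  unfold modsq; intros Ha.
  apply Rplus_lt_le_0_compat; [apply pow_lt; exact Ha | apply pow2_ge_0].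
Qed.

Lemma log_norm2_derive (s : R) :
  0 < fst (seg s) -> derivable_pt_lim (fun s => Clog_norm2 (seg s)) s (dlog_norm2 s).
Proof.
  intros Ha; pose proof (modsq_pos s Ha) as Hr.
  unfold Clog_norm2, dlog_norm2, modsq, seg_dot, seg_cross, Clog, seg in *; cbn [fst snd] in *.
  apply is_derive_Reals; auto_derive.
  - repeat split; lra.
  - rewrite ?Rmult_1_r; unfold Rminus, Rdiv, Rsqr; field; repeat split; lra.
Qed.

Lemma dlog_norm2_derive_at_critical (s : R) :
  0 < fst (seg s) -> dlog_norm2 s = 0 ->
  derivable_pt_lim dlog_norm2 s
    (2 * ((a2 - a1) ^ 2 + (b2 - b1) ^ 2) * (1 + fst (Clog (seg s))) / modsq s).
Proof.
  intros Ha Hz.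
  pose proof (modsq_pos s Ha) as Hr.
  assert (Hcrit : fst (Clog (seg s)) * seg_dot s + snd (Clog (seg s)) * seg_cross s = 0).
  { unfold dlog_norm2 in Hz.
    apply (Rmult_eq_reg_r (2 / modsq s)); [| apply Rgt_not_eq, Rdiv_lt_0_compat; lra].
    rewrite Rmult_0_l, <- Hz; field; lra. }
  replace (2 * ((a2 - a1) ^ 2 + (b2 - b1) ^ 2) * (1 + fst (Clog (seg s))) / modsq s)
    with (2 * ((a2 - a1) ^ 2 + (b2 - b1) ^ 2) * (1 + fst (Clog (seg s))) / modsq s
          - 4 * seg_dot s
            * (fst (Clog (seg s)) * seg_dot s + snd (Clog (seg s)) * seg_cross s)
            / modsq s ^ 2)
    by (rewrite Hcrit; field; lra).
  unfold dlog_norm2, modsq, seg_dot, seg_cross, Clog, seg in *; cbn [fst snd] in *.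
  apply is_derive_Reals; auto_derive.
  - repeat split; lra.
  - rewrite ?Rmult_1_r; unfold Rminus, Rdiv, Rsqr; field; repeat split; lra.
Qed.
End Segment.

Lemma expDisk_convex (eps : R) (z1 z2 : C) (t : R) :
  0 < eps < 1 -> in_expDisk eps z1 -> in_expDisk eps z2 -> 0 <= t <= 1 ->
  in_expDisk eps (Cadd (Cscale (1 - t) z1) (Cscale t z2)).
Proof.
  intros He H1 H2 Ht.
  destruct (expDisk_Clog eps z1 He H1) as [Re1 Q1].
  destruct (expDisk_Clog eps z2 He H2) as [Re2 Q2].
  destruct z1 as [a1 b1], z2 as [a2 b2]; cbn [fst snd] in *.
  replace (Cadd (Cscale (1 - t) (a1, b1)) (Cscale t (a2, b2))) with (seg a1 b1 a2 b2 t)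
    by reflexivity.
  pose proof (exp_pos (-1)) as He1.
  (* the segment stays in the half-plane Re z > 1/e, where ln|z| > -1 *)
  assert (Hre : forall s, 0 <= s <= 1 -> exp (-1) < fst (seg a1 b1 a2 b2 s)).
  { intros s Hs; unfold seg; cbn [fst snd].
    destruct (Req_dec s 0) as [-> | Hs0]; [lra |].
    assert (0 < s * (a2 - exp (-1))) by (apply Rmult_lt_0_compat; lra).
    assert (0 <= (1 - s) * (a1 - exp (-1))) by (apply Rmult_le_pos; lra).
    nra. }
  assert (Hlog : forall s, 0 <= s <= 1 -> -1 < fst (Clog (seg a1 b1 a2 b2 s))).
  { intros s Hs; specialize (Hre s Hs); unfold Clog.
    destruct (seg a1 b1 a2 b2 s) as [a b]; cbn [fst snd] in *.
    assert (Hln : ln (a * a) <= ln (a * a + b * b)) by (apply ln_le; nra).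
    rewrite ln_mult in Hln by lra.
    assert (-1 < ln a) by (rewrite <- (ln_exp (-1)); apply ln_increasing; lra).
    lra. }
  destruct (Req_dec ((a2 - a1) ^ 2 + (b2 - b1) ^ 2) 0) as [Hdeg | Hdeg].
  { pose proof (pow2_ge_0 (a2 - a1)); pose proof (pow2_ge_0 (b2 - b1)).
    assert (Da : a2 - a1 = 0) by (apply Rsqr_0_uniq; rewrite Rsqr_pow2; lra).
    assert (Db : b2 - b1 = 0) by (apply Rsqr_0_uniq; rewrite Rsqr_pow2; lra).
    replace a2 with a1 by lra; replace b2 with b1 by lra.
    replace (seg a1 b1 a1 b1 t) with (a1, b1) by (unfold seg; f_equal; ring).
    apply Clog_expDisk; cbn [fst snd]; lra. }
  assert (Hmax : Clog_norm2 (seg a1 b1 a2 b2 t)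
                 <= Rmax (Clog_norm2 (seg a1 b1 a2 b2 0)) (Clog_norm2 (seg a1 b1 a2 b2 1))).
  { apply (max_at_endpoints (fun s => Clog_norm2 (seg a1 b1 a2 b2 s))
                            (dlog_norm2 a1 b1 a2 b2)); [| | exact Ht].
    - intros s Hs; apply log_norm2_derive; specialize (Hre s Hs); lra.
    - intros s Hs Hz.
      specialize (Hre s ltac:(lra)); specialize (Hlog s ltac:(lra)).
      eexists; split; [| apply dlog_norm2_derive_at_critical; [lra | exact Hz]].
      assert (0 < (a2 - a1) ^ 2 + (b2 - b1) ^ 2)
        by (pose proof (pow2_ge_0 (a2 - a1)); pose proof (pow2_ge_0 (b2 - b1)); lra).
      apply Rdiv_lt_0_compat; [apply Rmult_lt_0_compat; lra | apply modsq_pos; lra]. }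
  replace (seg a1 b1 a2 b2 0) with (a1, b1) in Hmax by (unfold seg; f_equal; ring).
  replace (seg a1 b1 a2 b2 1) with (a2, b2) in Hmax by (unfold seg; f_equal; ring).
  apply Clog_expDisk; [lra | specialize (Hre t Ht); lra |].
  eapply Rle_trans; [exact Hmax | apply Rmax_lub; assumption].
Qed.

Lemma edge_quotient_convex (r1 r2 s1 s2 x1 x2 : C) (t : R) :
  Cdiv (Csub (Cmul (Cadd (Cscale (1 - t) r1) (Cscale t s1)) x1)
             (Cmul (Cadd (Cscale (1 - t) r2) (Cscale t s2)) x2)) (Csub x1 x2) =
  Cadd (Cscale (1 - t) (Cdiv (Csub (Cmul r1 x1) (Cmul r2 x2)) (Csub x1 x2)))
       (Cscale t (Cdiv (Csub (Cmul s1 x1) (Cmul s2 x2)) (Csub x1 x2))).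
Proof.
  destruct r1, r2, s1, s2, x1, x2; unfold Cdiv, Csub, Cmul, Cadd, Cscale; simpl.
  f_equal; unfold Rdiv; ring.
Qed.

Theorem lemma3p5 : forall (m : nat) (eps : R),
  (2 <= m)%nat -> 0 < eps < 1 -> convex_Cm (E m eps).
Proof.
  intros m eps _ He r s t Hr Hs Ht k Hk.
  destruct (Hr k Hk) as [Hr_coord Hr_edge], (Hs k Hk) as [Hs_coord Hs_edge].
  split.
  - apply expDisk_convex; assumption.
  - rewrite edge_quotient_convex; apply expDisk_convex; assumption.
Qed.
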